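(* Let $q$ be a prime power, $k\ge1$ and $n\ge 2k+1$. If $\mathcal{L}$ is a Cameron-Liebler $k$-set of $\mathrm{AG}(n,q)$ with parameter $x=1$, then $\mathcal{L}$ consists of all affine $k$-spaces through some fixed affine point.
   Context: $\mathrm{AG}(n,q)$ is $\mathrm{PG}(n,q)$ with a hyperplane $\pi_\infty$ removed; affine points are points outside $\pi_\infty$, affine $k$-spaces are $k$-dimensional projective subspaces not contained in $\pi_\infty$. With $A_n$ the incidence matrix of affine points versus affine $k$-spaces, a set $\mathcal{L}$ of affine $k$-spaces is a Cameron-Liebler $k$-set of $\mathrm{AG}(n,q)$ if its characteristic vector lies in the real row space $\mathrm{Im}(A_n^T)$; its parameter is $|\mathcal{L}|/\left[{n\atop k}\right]_q$ with $\left[{a\atop b}\right]_q=\frac{(q^a-1)\cdots(q^{a-b+1}-1)}{(q^b-1)\cdots(q-1)}$. *)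

From HB Require Import structures.
From mathcomp Require Import all_boot all_order all_algebra.
From mathcomp Require Import reals.
Set Implicit Arguments. Unset Strict Implicit. Unset Printing Implicit Defensive.
Import Order.TTheory GRing.Theory Num.Theory.
Local Open Scope ring_scope.

(* PG(n,q) is modelled on the vector space V = F^(n+1) ('rV[F]_(n.+1)),
   F a finite field with q = #|F| elements.  A projective d-space is a
   (d+1)-dimensional vector subspace, represented by its set of vectors. *)

Section AG.
Variables (F : finFieldType) (n : nat).
Local Notation V := 'rV[F]_(n.+1).

Definition vsubspace (d : nat) (S : {set V}) : bool :=
  [exists M : 'M[F]_(d, n.+1),
     (\rank M == d) && (S == [set v : V | (v <= M)%MS])].

Definition pi_inf : {set V} := [set v : V | v ord0 ord0 == 0].

Definition affine_space (k : nat) (S : {set V}) : bool :=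
  vsubspace k.+1 S && ~~ (S \subset pi_inf).

Definition affine_point (P : {set V}) : bool := affine_space 0 P.

(* L is a Cameron-Liebler k-set: L is a set of affine k-spaces whose
   characteristic vector lies in the real row space Im(A_n^T), where
   A_n is the incidence matrix affine points x affine k-spaces;
   i.e. chi_L = A_n^T y for some real vector y indexed by affine points. *)
Definition cameron_liebler (R : realType) (k : nat) (L : {set {set V}}) : Prop :=
  (forall K, K \in L -> affine_space k K) /\
  exists y : {set V} -> R,
    forall K, affine_space k K ->
      ((K \in L)%:R : R) = \sum_(P | affine_point P && (P \subset K)) y P.

End AG.

Definition qbinom (R : realType) (q a b : nat) : R :=
  \prod_(i < b) (((q ^ (a - i))%:R - 1) / ((q ^ i.+1)%:R - 1)).

Definition cl_parameter (R : realType) (F : finFieldType) (n k : nat)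
  (L : {set {set 'rV[F]_(n.+1)}}) : R :=
  (#|L|%:R) / qbinom R #|F| n k.

Arguments vsubspace {F n} d S.
Arguments pi_inf {F n}.
Arguments affine_space {F n} k S.
Arguments affine_point {F n} P.
Arguments cameron_liebler {F n} R k L.
Arguments cl_parameter R {F} n k L.

From HB Require Import structures.
From mathcomp Require Import all_boot all_order all_algebra.
From mathcomp Require Import reals zify.
Set Implicit Arguments. Unset Strict Implicit. Unset Printing Implicit Defensive.
Import Order.TTheory GRing.Theory Num.Theory.
Local Open Scope ring_scope.

(* Write V = F^(n+1) and H for the hyperplane at infinity, so that an affine
   k-space is a (k+1)-dimensional subspace B not contained in H, and B :&: H
   is its (k-1)-space at infinity.  Summing the equations chi_L = A_n^T y
   over all affine k-spaces shows that the weights y sum to 1 when the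
   parameter is 1.  Summing them over the affine k-spaces K with W <= K <= U,
   for a k-dimensional W <= H, gives the sum of the y_P with P <= U, which
   does not depend on W.  Taking U = V, every parallel class contains exactly
   one member A W of L; taking U = A W1 + W2, the members A W1 and A W2 meet
   in an affine point whenever W1 :&: W2 has codimension 1 in W1.  An
   induction on k, lowering the dimension by intersecting the spaces A W over
   the covers of a fixed subspace of H, then shows that all the A W pass
   through one affine point p, and L is the star of p. *)

Section RankFacts.
Variables (F : fieldType) (N : nat).

Lemma submx_by_rank m1 m2 (A : 'M[F]_(m1, N)) (B : 'M[F]_(m2, N)) :
  (A <= B)%MS -> (\rank B <= \rank A)%N -> (B <= A)%MS.
Proof. by move=> sAB; rewrite (geq_leqif (mxrank_leqif_sup sAB)). Qed.

Lemma mxrank_adds_row m (Y : 'M[F]_(m, N)) (v : 'rV[F]_N) :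
  \rank (Y + v)%MS = if (v <= Y)%MS then \rank Y else (\rank Y).+1.
Proof.
case: ifP => vY.
  by apply/eqmx_rank/andP; rewrite addsmx_sub submx_refl vY addsmxSl.
have ltY : (\rank Y < \rank (Y + v))%N.
  by rewrite (ltn_leqif (mxrank_leqif_sup (addsmxSl Y v))) addsmx_sub vY andbF.
have ltv : (\rank (Y :&: v)%MS < \rank v)%N.
  by rewrite (ltn_leqif (mxrank_leqif_sup (capmxSr Y v))) sub_capmx vY.
have := mxrank_sum_cap Y v; have := rank_leq_row v; lia.
Qed.

Lemma exists_submx_rank (W : 'M[F]_N) r : (r <= \rank W)%N ->
  exists2 T : 'M[F]_N, \rank T = r & (T <= W)%MS.
Proof.
move=> le_rW; exists (pid_mx r *m row_base W).
  by rewrite mxrankMfree ?row_base_free // rank_pid_mx // (leq_trans le_rW (rank_leq_col W)).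
by apply: submx_trans (submxMl _ _) _; rewrite eq_row_base.
Qed.

Section Covers.
Variables (m1 m2 m3 : nat) (X : 'M[F]_(m1, N)) (Y : 'M[F]_(m2, N)) (Z : 'M[F]_(m3, N)).
Hypotheses (sXY : (X <= Y)%MS) (sXZ : (X <= Z)%MS).
Hypotheses (rkY : \rank Y = (\rank X).+1) (rkZ : \rank Z = (\rank X).+1).
Hypothesis neYZ : ~~ (Y == Z)%MS.

Lemma mxrank_cap_covers : \rank (Y :&: Z)%MS = \rank X.
Proof.
have ltYZ : (\rank Y < \rank (Y + Z))%N.
  rewrite (ltn_leqif (mxrank_leqif_sup (addsmxSl Y Z))) addsmx_sub submx_refl /=.
  by apply: contra neYZ => sZY; rewrite sZY submx_by_rank // rkY rkZ.
have := mxrank_sum_cap Y Z; have := rank_leq_col (Y + Z)%MS.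
have : (\rank X <= \rank (Y :&: Z))%N by rewrite mxrankS // sub_capmx sXY sXZ.
lia.
Qed.

Lemma capmx_covers : (Y :&: Z <= X)%MS.
Proof.
by apply: submx_by_rank; rewrite ?mxrank_cap_covers // sub_capmx sXY sXZ.
Qed.

Lemma mxrank_adds_covers : \rank (Y + Z)%MS = (\rank X).+2.
Proof. by have := mxrank_sum_cap Y Z; rewrite mxrank_cap_covers rkY rkZ; lia. Qed.

End Covers.
End RankFacts.

Section Hyperplane.
Variables (F : fieldType) (n : nat) (H : 'M[F]_(n.+1)).
Hypothesis rkH : \rank H = n.
Local Notation M := 'M[F]_(n.+1).

Lemma mxrank_cap_hyperplane m (X : 'M[F]_(m, n.+1)) : ~~ (X <= H)%MS ->
  (\rank (X :&: H)%MS).+1 = \rank X.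
Proof.
move=> nXH; have ltH : (\rank H < \rank (X + H))%N.
  by rewrite (ltn_leqif (mxrank_leqif_sup (addsmxSr X H))) addsmx_sub negb_and nXH.
have := mxrank_sum_cap X H; have := rank_leq_col (X + H)%MS; lia.
Qed.

Lemma capmx_hyperplane_sub m1 m2 (B : 'M[F]_(m1, n.+1)) (T : 'M[F]_(m2, n.+1)) :
  \rank B = (\rank T).+1 -> (T <= B)%MS -> (T <= H)%MS -> ~~ (B <= H)%MS ->
  (B :&: H <= T)%MS.
Proof.
move=> rkB sTB sTH nBH; apply: submx_by_rank; first by rewrite sub_capmx sTB sTH.
by have := mxrank_cap_hyperplane nBH; rewrite rkB => -[->].
Qed.

Lemma cap_notin_hyperplane r m1 m2 m3 m4 (B1 : 'M[F]_(m1, n.+1))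
    (B2 : 'M[F]_(m2, n.+1)) (T1 : 'M[F]_(m3, n.+1)) (T2 : 'M[F]_(m4, n.+1)) :
  \rank B1 = r.+1 -> \rank B2 = r.+1 -> (\rank (B1 + B2)%MS <= r.+2)%N ->
  (B1 :&: H <= T1)%MS -> (B2 :&: H <= T2)%MS -> (\rank (T1 :&: T2)%MS < r)%N ->
  ~~ (B1 :&: B2 <= H)%MS.
Proof.
move=> rkB1 rkB2 rkB12 sT1 sT2 rkT12; apply/negP => sBH.
have sBT : (B1 :&: B2 <= T1 :&: T2)%MS.
  rewrite sub_capmx; apply/andP; split.
    by apply: submx_trans sT1; rewrite sub_capmx capmxSl sBH.
  by apply: submx_trans sT2; rewrite sub_capmx capmxSr sBH.
have := mxrankS sBT; have := mxrank_sum_cap B1 B2; rewrite rkB1 rkB2.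
by clear -rkB12 rkT12; lia.
Qed.

(* A subspace of rank r + 1 is a projective r-space: it lies at infinity when
   it is contained in H, and is an affine r-space otherwise. *)
Definition covers (T W : M) : bool :=
  [&& \rank W == (\rank T).+1, (W <= H)%MS & (T <= W)%MS].

Definition extends_affinely k (A : M -> M) : Prop :=
  forall W : M, \rank W = k -> (W <= H)%MS ->
    [/\ \rank (A W) = k.+1, (W <= A W)%MS & ~~ (A W <= H)%MS].

Definition adjacent_meet_affinely k (A : M -> M) : Prop :=
  forall W1 W2 : M, \rank W1 = k -> \rank W2 = k -> (W1 <= H)%MS -> (W2 <= H)%MS ->
    \rank (W1 :&: W2)%MS = k.-1 -> ~~ ((A W1 :&: A W2)%MS <= H)%MS.

Lemma exists_cover_outside (T X : M) : (T <= X)%MS -> (X <= H)%MS ->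
  (\rank X < n)%N -> exists2 W, covers T W & ~~ (W <= X)%MS.
Proof.
move=> sTX sXH ltX; have /row_subPn[i nHiX] : ~~ (H <= X)%MS.
  by apply/negP => /mxrankS; lia.
have nHiT : ~~ (row i H <= T)%MS by apply: contra nHiX => /submx_trans; apply.
exists (T + row i H)%MS; last by apply: contra nHiX; apply: submx_trans (addsmxSr _ _).
by rewrite /covers mxrank_adds_row (negbTE nHiT) eqxx addsmx_sub
  (submx_trans sTX sXH) row_sub addsmxSl.
Qed.

Section Concurrency.
Variables (t : nat) (A : M -> M) (T : M).
Hypotheses (rkT : \rank T = t) (sTH : (T <= H)%MS).
Hypotheses (A_ext : extends_affinely t.+1 A) (A_adj : adjacent_meet_affinely t.+1 A).

Lemma coversP W : covers T W -> [/\ \rank W = t.+1, (W <= H)%MS & (T <= W)%MS].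
Proof. by case/and3P => /eqP; rewrite rkT. Qed.

Lemma mxrank_cap_cover W1 W2 : covers T W1 -> covers T W2 ->
  ~~ (W1 == W2)%MS -> \rank (W1 :&: W2)%MS = t.
Proof.
move=> /coversP[rk1 _ s1] /coversP[rk2 _ s2] ne.
by rewrite -rkT (mxrank_cap_covers s1 s2) ?rkT.
Qed.

Lemma mxrank_adds_cover W1 W2 : covers T W1 -> covers T W2 ->
  ~~ (W1 == W2)%MS -> \rank (W1 + W2)%MS = t.+2.
Proof.
move=> /coversP[rk1 _ s1] /coversP[rk2 _ s2] ne.
by rewrite -rkT (mxrank_adds_covers s1 s2) ?rkT.
Qed.

Lemma capmx_cover_planes W1 W2 W3 : covers T W1 -> covers T W2 -> covers T W3 ->
  ~~ (W1 == W2)%MS -> ~~ (W3 <= W1 + W2)%MS -> ((W1 + W2) :&: (W1 + W3) <= W1)%MS.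
Proof.
move=> c1 c2 c3 ne12 nW3; have [rk1 _ _] := coversP c1.
have ne13 : ~~ (W1 == W3)%MS.
  by apply: contra nW3 => /andP[_ sW31]; apply: submx_trans sW31 (addsmxSl _ _).
apply: capmx_covers; rewrite ?addsmxSl ?mxrank_adds_cover ?rk1 //.
by apply: contra nW3 => /andP[_]; apply: submx_trans (addsmxSr _ _).
Qed.

Lemma mxrank_cap_extensions W1 W2 : covers T W1 -> covers T W2 -> ~~ (W1 == W2)%MS ->
  \rank (A W1 :&: A W2)%MS = t.+1 /\ (T <= A W1 :&: A W2)%MS.
Proof.
move=> c1 c2 ne; have rk12 := mxrank_cap_cover c1 c2 ne.
have [[rk1 sW1H sTW1] [rk2 sW2H sTW2]] := (coversP c1, coversP c2).
have [[rkA1 sWA1 nA1H] [rkA2 sWA2 nA2H]] := (A_ext rk1 sW1H, A_ext rk2 sW2H).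
have sTA : (T <= A W1 :&: A W2)%MS.
  by rewrite sub_capmx (submx_trans sTW1) // (submx_trans sTW2).
split=> //; have nAH := A_adj rk1 rk2 sW1H sW2H rk12.
have cA1 : (A W1 :&: H <= W1)%MS by apply: capmx_hyperplane_sub; rewrite ?rkA1 ?rk1.
have cA2 : (A W2 :&: H <= W2)%MS by apply: capmx_hyperplane_sub; rewrite ?rkA2 ?rk2.
have sAW : ((A W1 :&: A W2) :&: H <= W1 :&: W2)%MS.
  rewrite sub_capmx; apply/andP; split.
    exact: submx_trans (capmxS (capmxSl _ _) (submx_refl H)) cA1.
  exact: submx_trans (capmxS (capmxSr _ _) (submx_refl H)) cA2.
have := mxrank_cap_hyperplane nAH; have := mxrankS sAW.
have : (t <= \rank ((A W1 :&: A W2) :&: H))%N by rewrite -rkT mxrankS // sub_capmx sTA.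
rewrite rk12; clear; lia.
Qed.

Lemma adds_extensions_cap_hyperplane W1 W2 : covers T W1 -> covers T W2 ->
  ~~ (W1 == W2)%MS -> ((A W1 + A W2) :&: H <= W1 + W2)%MS.
Proof.
move=> c1 c2 ne; have [rkA12 _] := mxrank_cap_extensions c1 c2 ne.
have [[rk1 sW1H _] [rk2 sW2H _]] := (coversP c1, coversP c2).
have [[rkA1 sWA1 nA1H] [rkA2 sWA2 _]] := (A_ext rk1 sW1H, A_ext rk2 sW2H).
have nAH : ~~ (A W1 + A W2 <= H)%MS by rewrite addsmx_sub negb_and nA1H.
apply: submx_by_rank.
  by rewrite sub_capmx (addsmxS sWA1 sWA2) addsmx_sub sW1H sW2H.
have := mxrank_cap_hyperplane nAH; have := mxrank_sum_cap (A W1) (A W2).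
rewrite (mxrank_adds_cover c1 c2 ne) rkA1 rkA2 rkA12; clear; lia.
Qed.

(* If A W missed A W1 :&: A W2, its hyperplanes A W :&: A Wi would differ,
   forcing A W <= A W1 + A W2 and hence W <= W1 + W2. *)
Lemma cap_extensions_sub W W1 W2 : covers T W -> covers T W1 -> covers T W2 ->
  ~~ (W1 == W2)%MS -> ~~ (W <= W1 + W2)%MS -> (A W1 :&: A W2 <= A W)%MS.
Proof.
move=> c c1 c2 ne12 nW; apply/negPn/negP => nG.
have ne1 : ~~ (W == W1)%MS.
  by apply: contra nW => /andP[sWW1 _]; exact: submx_trans (addsmxSl _ _).
have ne2 : ~~ (W == W2)%MS.
  by apply: contra nW => /andP[sWW2 _]; exact: submx_trans (addsmxSr _ _).
have [rkC1 _] := mxrank_cap_extensions c c1 ne1; have [rkC2 _] := mxrank_cap_extensions c c2 ne2.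
have [rkG _] := mxrank_cap_extensions c1 c2 ne12.
have [rk sWH _] := coversP c; have [rkA sWA _] := A_ext rk sWH.
have nC21 : ~~ (A W :&: A W2 <= A W :&: A W1)%MS.
  apply/negP => sC21; have sC12 := submx_by_rank sC21 (eq_leq (etrans rkC1 (esym rkC2))).
  have sCG : (A W :&: A W1 <= A W1 :&: A W2)%MS.
    by rewrite sub_capmx capmxSr (submx_trans sC12 (capmxSr _ _)).
  move/negP: nG; apply; apply: submx_trans (capmxSl (A W) (A W1)).
  by apply: submx_by_rank sCG _; rewrite rkG rkC1.
have sA : (A W <= A W1 + A W2)%MS.
  have sCA : ((A W :&: A W1) + (A W :&: A W2) <= A W)%MS by rewrite addsmx_sub !capmxSl.
  have ltC : (\rank (A W :&: A W1) < \rank ((A W :&: A W1) + (A W :&: A W2)))%N.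
    by rewrite (ltn_leqif (mxrank_leqif_sup (addsmxSl _ _))) addsmx_sub negb_and nC21 orbT.
  apply: submx_trans (submx_by_rank sCA _) (addsmxS (capmxSr _ _) (capmxSr _ _)).
  by move: ltC; rewrite rkA rkC1.
move/negP: nW; apply; apply: submx_trans (adds_extensions_cap_hyperplane c1 c2 ne12).
by rewrite sub_capmx (submx_trans sWA sA) sWH.
Qed.

Lemma common_extension_of_covers : (t.+3 <= n)%N ->
  exists G : M, [/\ \rank G = t.+1, (T <= G)%MS, ~~ (G <= H)%MS &
    forall W, covers T W -> (G <= A W)%MS].
Proof.
move=> tn.
have ltT : (\rank T < n)%N by rewrite rkT (ltnW (ltnW tn)).
have [W1 c1 _] := exists_cover_outside (submx_refl T) sTH ltT.
have [rk1 sW1H sTW1] := coversP c1.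
have [W2 c2 nW21] : exists2 W2, covers T W2 & ~~ (W2 <= W1)%MS.
  by apply: exists_cover_outside; rewrite ?rk1 ?(ltnW tn).
have [rk2 sW2H _] := coversP c2.
have ne12 : ~~ (W1 == W2)%MS by rewrite negb_and nW21 orbT.
have [W3 c3 nW3] : exists2 W3, covers T W3 & ~~ (W3 <= W1 + W2)%MS.
  apply: exists_cover_outside => //; last by rewrite (mxrank_adds_cover c1 c2 ne12).
    exact: submx_trans sTW1 (addsmxSl _ _).
  by rewrite addsmx_sub sW1H sW2H.
have [rkG sTG] := mxrank_cap_extensions c1 c2 ne12.
exists (A W1 :&: A W2)%MS; split => //.
  by apply: A_adj; rewrite ?(mxrank_cap_cover c1 c2 ne12).
move=> W c; have [rk sWH _] := coversP c.
case: (boolP (W <= W1 + W2)%MS) => [sW12|]; last exact: cap_extensions_sub.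
have ne13 : ~~ (W1 == W3)%MS.
  by apply: contra nW3 => /andP[_ sW31]; apply: submx_trans sW31 (addsmxSl _ _).
have ne23 : ~~ (W2 == W3)%MS.
  by apply: contra nW3 => /andP[_ sW32]; apply: submx_trans sW32 (addsmxSr _ _).
have sG3 := cap_extensions_sub c3 c1 c2 ne12 nW3.
case: (boolP (W <= W1 + W3)%MS) => [sW13|nW13]; last first.
  by apply: submx_trans (cap_extensions_sub c c1 c3 ne13 nW13); rewrite sub_capmx capmxSl sG3.
case: (boolP (W <= W2 + W3)%MS) => [sW23|nW23]; last first.
  by apply: submx_trans (cap_extensions_sub c c2 c3 ne23 nW23); rewrite sub_capmx capmxSr sG3.
have sWW1 : (W <= W1)%MS.
  by apply: submx_trans (capmx_cover_planes c1 c2 c3 ne12 nW3); rewrite sub_capmx sW12.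
have sWW2 : (W <= W2)%MS.
  have ne21 : ~~ (W2 == W1)%MS by rewrite negb_and nW21.
  apply: submx_trans (capmx_cover_planes c2 c1 c3 ne21 _); last by rewrite addsmxC.
  by rewrite sub_capmx addsmxC sW12.
have /mxrankS : (W <= W1 :&: W2)%MS by rewrite sub_capmx sWW1.
by rewrite (mxrank_cap_cover c1 c2 ne12) rk ltnn.
Qed.

End Concurrency.

End Hyperplane.

Section CommonPoint.
Variables (F : finFieldType) (n : nat) (H : 'M[F]_(n.+1)).
Hypothesis rkH : \rank H = n.
Local Notation M := 'M[F]_(n.+1).

Lemma lower_extension k (A : M -> M) : (k.+4 <= n)%N ->
  extends_affinely H k.+2 A -> adjacent_meet_affinely H k.+2 A ->
  exists B : M -> M, [/\ extends_affinely H k.+1 B, adjacent_meet_affinely H k.+1 B &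
    forall T W, \rank T = k.+1 -> (T <= H)%MS -> covers H T W -> (B T <= A W)%MS].
Proof.
move=> kn A_ext A_adj.
pose good (T G : M) := [&& \rank G == k.+2, (T <= G)%MS, ~~ (G <= H)%MS &
  [forall W, covers H T W ==> (G <= A W)%MS]].
pose B T := odflt 0 [pick G | good T G].
have goodB T : \rank T = k.+1 -> (T <= H)%MS -> good T (B T).
  move=> rkT sTH.
  have [G [rkG sTG nGH sGA]] := common_extension_of_covers rkH rkT sTH A_ext A_adj kn.
  rewrite /B; case: pickP => [//|/(_ G)]; rewrite /good rkG eqxx sTG nGH /=.
  by move/negbT/negP; case; apply/forallP => W; apply/implyP; exact: sGA.
exists B; split.
- by move=> T rkT sTH; have /and4P[/eqP] := goodB T rkT sTH.
- move=> T1 T2 rk1 rk2 sT1H sT2H rk12.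
  have rkW : \rank (T1 + T2)%MS = k.+2.
    by have := mxrank_sum_cap T1 T2; rewrite rk1 rk2 rk12; clear; lia.
  have sWH : (T1 + T2 <= H)%MS by rewrite addsmx_sub sT1H sT2H.
  have [rkA _ _] := A_ext _ rkW sWH.
  have /and4P[/eqP rkB1 sTB1 nB1H /forallP/(_ (T1 + T2)%MS)/implyP sBA1] :=
    goodB T1 rk1 sT1H.
  have /and4P[/eqP rkB2 sTB2 nB2H /forallP/(_ (T1 + T2)%MS)/implyP sBA2] :=
    goodB T2 rk2 sT2H.
  apply: (cap_notin_hyperplane (T1 := T1) (T2 := T2) rkB1 rkB2).
  - rewrite -rkA mxrankS // addsmx_sub sBA1 ?sBA2 //.
      by rewrite /covers rkW rk2 eqxx sWH addsmxSr.
    by rewrite /covers rkW rk1 eqxx sWH addsmxSl.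
  - by apply: capmx_hyperplane_sub; rewrite ?rkB1 ?rk1.
  - by apply: capmx_hyperplane_sub; rewrite ?rkB2 ?rk2.
  - by rewrite rk12.
- move=> T W rkT sTH cW; have /and4P[_ _ _ /forallP/(_ W)/implyP] := goodB T rkT sTH.
  exact.
Qed.

Lemma common_affine_point k (A : M -> M) : (0 < k)%N -> (k.+2 <= n)%N ->
  extends_affinely H k A -> adjacent_meet_affinely H k A ->
  exists2 p : 'rV[F]_(n.+1), ~~ (p <= H)%MS &
    forall W, \rank W = k -> (W <= H)%MS -> (p <= A W)%MS.
Proof.
case: k => // k _; elim: k A => [|k IH] A kn A_ext A_adj.
  have [G [_ _ nGH sGA]] := common_extension_of_covers rkH (mxrank0 F n.+1 n.+1) (sub0mx _ H)
    A_ext A_adj kn.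
  have /row_subPn[i nGiH] := nGH; exists (row i G) => // W rkW sWH.
  apply: submx_trans (row_sub i G) (sGA W _).
  by rewrite /covers rkW mxrank0 eqxx sWH sub0mx.
have [B [B_ext B_adj sBA]] := lower_extension kn A_ext A_adj.
have [p npH pB] := IH B (ltnW kn) B_ext B_adj.
exists p => // W rkW sWH.
have [T rkT sTW] : exists2 T : M, \rank T = k.+1 & (T <= W)%MS.
  by apply: exists_submx_rank; rewrite rkW.
have sTH := submx_trans sTW sWH.
apply: submx_trans (pB T rkT sTH) (sBA T W rkT sTH _).
by rewrite /covers rkW rkT eqxx sWH sTW.
Qed.

End CommonPoint.

Section Counting.
Variables (F : finFieldType) (N : nat).
Local Notation q := #|F|.

Lemma card_rowspace m (A : 'M[F]_(m, N)) :
  #|[set v : 'rV[F]_N | (v <= A)%MS]| = (q ^ \rank A)%N.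
Proof.
have -> : [set v : 'rV[F]_N | (v <= A)%MS] =
    [set u *m row_base A | u in [set: 'rV[F]_(\rank A)]].
  apply/setP => v; rewrite inE; apply/idP/imsetP.
    by rewrite -(eq_row_base A) => /submxP[D ->]; exists D; rewrite ?inE.
  by case=> u _ ->; rewrite -(eq_row_base A) submxMl.
rewrite card_imset; last exact: row_free_inj (row_base_free A).
by rewrite cardsT card_mx mul1n.
Qed.

Lemma card_rowspace_diff m1 m2 (S : 'M[F]_(m1, N)) (Y : 'M[F]_(m2, N)) :
  (Y <= S)%MS ->
  #|[set u : 'rV[F]_N | (u <= S)%MS && ~~ (u <= Y)%MS]| = (q ^ \rank S - q ^ \rank Y)%N.
Proof.
move=> sYS; have -> : [set u : 'rV[F]_N | (u <= S)%MS && ~~ (u <= Y)%MS] =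
    [set u | (u <= S)%MS] :\: [set u | (u <= Y)%MS].
  by apply/setP => u; rewrite !inE andbC.
rewrite cardsD (setIidPr _) ?card_rowspace //.
by apply/subsetP => u; rewrite !inE => /submx_trans; apply.
Qed.

Section IndependentRows.
Variables (r : nat) (X : 'M[F]_(r, N)) (S : 'M[F]_N).
Hypothesis sXS : (X <= S)%MS.

Lemma independent_col_mx d (u : 'rV[F]_N) (D : 'M[F]_(d, N)) :
  ((col_mx u D <= S)%MS && (\rank (X + col_mx u D)%MS == \rank X + d.+1)%N) =
  [&& (u <= S)%MS, ~~ (u <= X + D)%MS, (D <= S)%MS & (\rank (X + D)%MS == \rank X + d)%N].
Proof.
have -> : \rank (X + col_mx u D)%MS = \rank ((X + D) + u)%MS.
  by rewrite (adds_eqmx (eqmx_refl X) (eqmx_sym (addsmxE u D))) [(u + D)%MS]addsmxC addsmxA.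
rewrite col_mx_sub mxrank_adds_row; case: ifP => _ /=; last by rewrite addnS eqSS andbA.
suff -> : (\rank (X + D)%MS == \rank X + d.+1)%N = false by rewrite !andbF.
apply/negbTE/eqP => eq_r; have := leq_of_leqif (mxrank_adds_leqif X D).
by rewrite eq_r leq_add2l ltnNge rank_leq_row.
Qed.

Lemma card_independent_rows d :
  #|[set M : 'M[F]_(d, N) | (M <= S)%MS && (\rank (X + M)%MS == \rank X + d)%N]|
  = (\prod_(i < d) (q ^ \rank S - q ^ (\rank X + i)))%N.
Proof.
elim: d => [|d IH].
  rewrite big_ord0 -[RHS](card_mx F 0 N); apply: eq_card => M.
  by rewrite !inE [M]flatmx0 sub0mx /= addsmx0 addn0 eqxx.
rewrite big_ord_recr /= -IH; set Sd := [set M : 'M_(d, N) | _].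
rewrite -[LHS]sum1_card (partition_big (fun M : 'M_(1 + d, N) => dsubmx M) (mem Sd)) /=;
  last first.
  by move=> M; rewrite !inE -{1 2}(@vsubmxK _ 1 d _ M) independent_col_mx => /and4P[_ _ -> ->].
rewrite -sum_nat_const; apply: eq_bigr => D; rewrite inE => /andP[sDS /eqP rkXD].
rewrite (reindex (fun u : 'rV[F]_N => col_mx u D : 'M_(1 + d, N))) /=; last first.
  exists (fun M : 'M_(1 + d, N) => usubmx M) => [u _ | M]; first by rewrite col_mxKu.
  by case/andP=> _ /eqP <-; rewrite vsubmxK.
rewrite sum1_card -rkXD -card_rowspace_diff ?addsmx_sub ?sXS //; apply: eq_card => u.
by rewrite unfold_in /= !inE independent_col_mx col_mxKd eqxx sDS rkXD eqxx !andbT.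
Qed.

End IndependentRows.
End Counting.

Section SubspaceSets.
Variables (F : finFieldType) (n : nat).
Local Notation V := 'rV[F]_(n.+1).
Local Notation q := #|F|.

Definition rowset m (A : 'M[F]_(m, n.+1)) : {set V} := [set v : V | (v <= A)%MS].

Lemma rowset_sub m1 m2 (A : 'M[F]_(m1, n.+1)) (B : 'M[F]_(m2, n.+1)) :
  (rowset A \subset rowset B) = (A <= B)%MS.
Proof.
apply/subsetP/idP => [sAB|sAB v]; last by rewrite !inE => /submx_trans; apply.
by apply/row_subP => i; have := sAB (row i A); rewrite !inE row_sub; apply.
Qed.

Lemma rowset_eq m1 m2 (A : 'M[F]_(m1, n.+1)) (B : 'M[F]_(m2, n.+1)) :
  (A <= B)%MS -> (B <= A)%MS -> rowset A = rowset B.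
Proof. by move=> sAB sBA; apply/eqP; rewrite eqEsubset !rowset_sub sAB sBA. Qed.

Definition Hinf : 'M[F]_(n.+1) := kermx (delta_mx 0 0 : 'cV[F]_(n.+1)).

Lemma sub_Hinf (v : V) : (v <= Hinf)%MS = (v ord0 ord0 == 0).
Proof.
rewrite sub_kermx -colE; apply/eqP/eqP => [/matrixP/(_ ord0 ord0) | v0].
  by rewrite !mxE.
by apply/matrixP => i j; rewrite !ord1 !mxE.
Qed.

Lemma mxrank_Hinf : \rank Hinf = n.
Proof. by rewrite mxrank_ker mxrank_delta subn1. Qed.

Lemma mxrank_cap_Hinf k (B : 'M[F]_(n.+1)) : \rank B = k.+1 -> ~~ (B <= Hinf)%MS ->
  \rank (B :&: Hinf)%MS = k.
Proof. by move=> rkB /(mxrank_cap_hyperplane mxrank_Hinf); rewrite rkB => -[]. Qed.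

Lemma pi_infE : pi_inf = rowset Hinf.
Proof. by apply/setP => v; rewrite !inE sub_Hinf. Qed.

Lemma vsubspaceP d (S : {set V}) :
  vsubspace d S -> exists2 A : 'M[F]_(n.+1), \rank A = d & S = rowset A.
Proof.
case/existsP => M /andP[/eqP rkM /eqP ->]; exists <<M>>%MS; first by rewrite mxrank_gen.
by apply/setP => v; rewrite !inE genmxE.
Qed.

Lemma vsubspace_rowset m (A : 'M[F]_(m, n.+1)) : vsubspace (\rank A) (rowset A).
Proof.
apply/existsP; exists (row_base A); rewrite eq_row_base eqxx /=.
by apply/eqP/setP => v; rewrite !inE eq_row_base.
Qed.

Lemma affine_spaceP k (K : {set V}) : affine_space k K ->
  exists2 A : 'M[F]_(n.+1), \rank A = k.+1 /\ ~~ (A <= Hinf)%MS & K = rowset A.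
Proof.
by case/andP => /vsubspaceP[A rkA ->]; rewrite pi_infE rowset_sub => nAH; exists A.
Qed.

Lemma affine_space_rowset k m (A : 'M[F]_(m, n.+1)) : \rank A = k.+1 ->
  ~~ (A <= Hinf)%MS -> affine_space k (rowset A).
Proof.
by move=> rkA nAH; rewrite /affine_space -rkA vsubspace_rowset pi_infE rowset_sub.
Qed.

Lemma mxrank_row_outside (p : V) : ~~ (p <= Hinf)%MS -> \rank p = 1%N.
Proof. by move=> npH; rewrite rank_rV; case: eqP npH => // ->; rewrite sub0mx. Qed.

Lemma affine_pointP (P : {set V}) : affine_point P ->
  exists2 p : V, ~~ (p <= Hinf)%MS & P = rowset p.
Proof.
case/affine_spaceP => A [rkA nAH] ->; have /row_subPn[i nAiH] := nAH.
exists (row i A) => //; apply: rowset_eq; last exact: row_sub.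
by apply: submx_by_rank (row_sub i A) _; rewrite rkA mxrank_row_outside.
Qed.

Lemma affine_point_rowset (p : V) : ~~ (p <= Hinf)%MS -> affine_point (rowset p).
Proof.
by move=> npH; apply: affine_space_rowset => //; rewrite mxrank_row_outside.
Qed.

Definition affine_between k (W U : 'M[F]_(n.+1)) (K : {set V}) : bool :=
  [&& affine_space k K, rowset W \subset K & K \subset rowset U].

Lemma card_affine_between (k : nat) (W U : 'M[F]_(n.+1)) (P : {set V}) :
  \rank W = k -> (W <= Hinf)%MS -> (W <= U)%MS -> affine_point P ->
  #|[set K | affine_between k W U K && (P \subset K)]| = (P \subset rowset U).
Proof.
move=> rkW sWH sWU /affine_pointP[p npH ->].
have npW : ~~ (p <= W)%MS by apply: contra npH => /submx_trans; apply.
have rkWp : \rank (W + p)%MS = k.+1 by rewrite mxrank_adds_row (negbTE npW) rkW.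
have nWpH : ~~ (W + p <= Hinf)%MS by rewrite addsmx_sub negb_and npH orbT.
have betweenE K : affine_between k W U K && (rowset p \subset K) =
    (K == rowset (W + p)%MS) && (p <= U)%MS.
  apply/idP/idP => [|/andP[/eqP -> pU]]; last first.
    by rewrite /affine_between affine_space_rowset // !rowset_sub addsmxSl addsmxSr
      addsmx_sub sWU pU.
  case/andP => /and3P[/affine_spaceP[B [rkB _] ->]]; rewrite !rowset_sub => sWB sBU spB.
  have sWpB : (W + p <= B)%MS by rewrite addsmx_sub sWB spB.
  rewrite (rowset_eq sWpB (submx_by_rank sWpB _)) ?rkB ?rkWp // eqxx.
  exact: submx_trans spB sBU.
rewrite rowset_sub; case: (boolP (p <= U)%MS) => pU.
  apply/eqP/cards1P; exists (rowset (W + p)%MS).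
  by apply/setP => K; rewrite !inE betweenE pU andbT.
apply/eqP; rewrite cards_eq0; apply/eqP/setP => K.
by rewrite !inE betweenE (negbTE pU) andbF.
Qed.

Definition affine_star k (P : {set V}) : {set {set V}} :=
  [set K | affine_space k K && (P \subset K)].

(* Double counting of the k-tuples of vectors which extend a vector of P to a
   basis of an affine k-space through P. *)
Lemma card_affine_star_mul k (P : {set V}) : affine_point P ->
  (#|affine_star k P| * \prod_(i < k) (q ^ k.+1 - q ^ (1 + i)) =
   \prod_(i < k) (q ^ n.+1 - q ^ (1 + i)))%N.
Proof.
case/affine_pointP => p npH ->; have rkp := mxrank_row_outside npH.
have := card_independent_rows (submx1 p) k; rewrite mxrank1 rkp => <-.
rewrite -[RHS]sum1_card (partition_big (fun M : 'M[F]_(k, n.+1) => rowset (p + M)%MS)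
  (mem (affine_star k (rowset p)))) /=; last first.
  move=> M; rewrite !inE => /andP[_ /eqP rkpM].
  rewrite affine_space_rowset ?rowset_sub ?addsmxSl // ?rkpM ?rkp //.
  by rewrite addsmx_sub negb_and npH.
rewrite -sum_nat_const; apply: eq_bigr => K; rewrite inE.
case/andP => /affine_spaceP[B [rkB _] ->]; rewrite rowset_sub => spB.
have := card_independent_rows spB k; rewrite rkB rkp => <-.
rewrite sum1_card; apply: eq_card => M.
rewrite !inE unfold_in /= !inE submx1 /=; apply/idP/idP.
  case/andP => sMB rkpM; rewrite rkpM /=.
  have spMB : (p + M <= B)%MS by rewrite addsmx_sub spB sMB.
  by rewrite (rowset_eq spMB (submx_by_rank spMB _)) // rkB (eqP rkpM).
case/andP => -> /eqP eqK; rewrite andbT.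
by have := subxx (rowset (p + M)%MS); rewrite {2}eqK rowset_sub addsmx_sub => /andP[].
Qed.

End SubspaceSets.

Arguments Hinf {F n}.

Lemma qbinom_prod (R : realType) (q n k : nat) : (1 < q)%N -> (k <= n)%N ->
  qbinom R q n k * ((\prod_(i < k) (q ^ k.+1 - q ^ (1 + i)))%N)%:R
  = ((\prod_(i < k) (q ^ n.+1 - q ^ (1 + i)))%N)%:R.
Proof.
move=> q_gt1 le_kn.
have factorE a i : (i < a)%N ->
    ((q ^ a.+1 - q ^ (1 + i))%:R : R) = (q ^ (1 + i))%:R * ((q ^ (a - i))%:R - 1).
  move=> lt_ia; have -> : (q ^ a.+1 = q ^ (1 + i) * q ^ (a - i))%N.
    by rewrite -expnD; congr (q ^ _)%N; lia.
  rewrite natrB ?natrM ?mulrBr ?mulr1 //.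
  by apply: leq_pmulr; rewrite expn_gt0 ltnW.
rewrite /qbinom !natr_prod.
rewrite (eq_bigr _ (fun (i : 'I_k) _ => factorE k i (ltn_ord i))).
rewrite (eq_bigr _ (fun (i : 'I_k) _ => factorE n i (leq_trans (ltn_ord i) le_kn))).
rewrite !big_split /= prodfV.
have -> : \prod_(i < k) ((q ^ (k - i))%:R - 1 : R) = \prod_(i < k) ((q ^ i.+1)%:R - 1).
  by rewrite (reindex_inj rev_ord_inj) /=; apply: eq_bigr => i _; rewrite subKn.
have nz : \prod_(i < k) ((q ^ i.+1)%:R - 1 : R) != 0.
  by apply/prodf_neq0 => i _; rewrite subr_eq0 pnatr_eq1 -(expn0 q) eqn_exp2l.
by rewrite [X in _ * X]mulrC mulrA divfK // mulrC.
Qed.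

Lemma card_affine_star (R : realType) (F : finFieldType) (n k : nat)
    (P : {set 'rV[F]_(n.+1)}) :
  (k <= n)%N -> affine_point P -> (#|affine_star k P|%:R : R) = qbinom R #|F| n k.
Proof.
move=> le_kn aP; have q_gt1 := card_finNzRing_gt1 F.
have nz : ((\prod_(i < k) (#|F| ^ k.+1 - #|F| ^ (1 + i)))%N%:R : R) != 0.
  rewrite pnatr_eq0 -lt0n prodn_gt0 // => i.
  by rewrite subn_gt0 ltn_exp2l // add1n ltnS ltn_ord.
by apply: (mulIf nz); rewrite qbinom_prod // -natrM card_affine_star_mul.
Qed.

Section CameronLiebler.
Variables (R : realType) (F : finFieldType) (n k : nat).
Local Notation V := 'rV[F]_(n.+1).
Variables (L : {set {set V}}) (y : {set V} -> R).
Hypothesis L_affine : forall K, K \in L -> affine_space k K.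
Hypothesis L_weights : forall K, affine_space k K ->
  ((K \in L)%:R : R) = \sum_(P | affine_point P && (P \subset K)) y P.

Lemma card_L_restricted (c : pred {set V}) : (forall K, c K -> affine_space k K) ->
  (#|[set K | c K && (K \in L)]|%:R : R) =
  \sum_(P | affine_point P) y P * #|[set K | c K && (P \subset K)]|%:R.
Proof.
move=> c_affine; transitivity (\sum_(K | c K) ((K \in L)%:R : R)).
  rewrite -sum1_card natr_sum big_mkcond [RHS]big_mkcond /=.
  by apply: eq_bigr => K _; rewrite inE; case: (c K); case: (K \in L).
transitivity (\sum_(K | c K) \sum_(P | affine_point P && (P \subset K)) y P).
  by apply: eq_bigr => K /c_affine /L_weights.
rewrite (exchange_big_dep (fun P => affine_point P)) /=; last by move=> K P _ /andP[].
apply: eq_bigr => P aP; rewrite mulr_natr -sumr_const.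
by apply: eq_bigl => K; rewrite inE aP.
Qed.

Lemma sum_weights_eq1 : (k <= n)%N -> cl_parameter R n k L = 1 ->
  \sum_(P | affine_point P) y P = 1.
Proof.
move=> le_kn param1.
have qbinom_neq0 : qbinom R #|F| n k != 0.
  apply/eqP => qbinom0; move: param1; rewrite /cl_parameter qbinom0 invr0 mulr0.
  by move/eqP; rewrite eq_sym oner_eq0.
have card_L : (#|L|%:R : R) = qbinom R #|F| n k.
  by move: param1; rewrite /cl_parameter => /divr1_eq.
apply: (mulIf qbinom_neq0); rewrite mul1r mulr_suml -[in RHS]card_L.
have -> : L = [set K | affine_space k K && (K \in L)].
  by apply/setP => K; rewrite inE andb_idl //; exact: L_affine.
rewrite card_L_restricted //; apply: eq_bigr => P aP.
by rewrite -(card_affine_star R le_kn aP).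
Qed.

Section ParameterOne.
Hypotheses (k_gt0 : (0 < k)%N) (le_k2n : (k.+2 <= n)%N).
Hypothesis weights_sum1 : \sum_(P | affine_point P) y P = 1.

Lemma card_L_between (W U : 'M[F]_(n.+1)) :
  \rank W = k -> (W <= Hinf)%MS -> (W <= U)%MS ->
  (#|[set K | affine_between k W U K && (K \in L)]|%:R : R) =
  \sum_(P | affine_point P) y P * (P \subset rowset U)%:R.
Proof.
move=> rkW sWH sWU; rewrite card_L_restricted; last by move=> K /and3P[].
by apply: eq_bigr => P aP; rewrite card_affine_between.
Qed.

Lemma card_L_parallel (W : 'M[F]_(n.+1)) : \rank W = k -> (W <= Hinf)%MS ->
  #|[set K | affine_between k W 1%:M K && (K \in L)]| = 1%N.
Proof.
move=> rkW sWH; apply/eqP; rewrite -(eqr_nat R) card_L_between ?submx1 //.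
apply/eqP; rewrite -[in RHS]weights_sum1; apply: eq_bigr => P _.
suff -> : P \subset rowset (1%:M : 'M[F]_(n.+1)) by rewrite mulr1.
by apply/subsetP => v _; rewrite inE submx1.
Qed.

Definition parallel_member (W : 'M[F]_(n.+1)) : 'M[F]_(n.+1) :=
  odflt 0 [pick X | [&& rowset X \in L, \rank X == k.+1, (W <= X)%MS & ~~ (X <= Hinf)%MS]].

Lemma parallel_memberP W : \rank W = k -> (W <= Hinf)%MS ->
  [/\ rowset (parallel_member W) \in L, \rank (parallel_member W) = k.+1,
      (W <= parallel_member W)%MS & ~~ (parallel_member W <= Hinf)%MS].
Proof.
move=> rkW sWH; have /eqP/cards1P[K0 eK0] := card_L_parallel rkW sWH.
have : K0 \in [set K | affine_between k W 1%:M K && (K \in L)] by rewrite eK0 set11.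
rewrite inE => /andP[/and3P[/affine_spaceP[B [rkB nBH] ->] sWB _] BL].
rewrite /parallel_member; case: pickP => [X /and4P[? /eqP ? ? ?] //|/(_ B)].
by rewrite BL rkB eqxx -rowset_sub sWB nBH.
Qed.

Lemma parallel_member_unique W K : \rank W = k -> (W <= Hinf)%MS ->
  K \in L -> rowset W \subset K -> K = rowset (parallel_member W).
Proof.
move=> rkW sWH KL sWK; have /eqP/cards1P[K0 eK0] := card_L_parallel rkW sWH.
have [AL rkA sWA nAH] := parallel_memberP rkW sWH.
have /set1P -> : K \in [set K0].
  rewrite -eK0 inE KL andbT /affine_between L_affine // sWK /=.
  by apply/subsetP => v _; rewrite inE submx1.
apply/esym/set1P; rewrite -eK0 inE AL andbT /affine_between affine_space_rowset //.
by rewrite !rowset_sub sWA submx1.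
Qed.

Lemma parallel_member_extends : extends_affinely Hinf k parallel_member.
Proof. by move=> W rkW sWH; have [] := parallel_memberP rkW sWH. Qed.

(* With U := A W1 + W2, the member of L over W1 lies between W1 and U, so the
   equal count between W2 and U puts A W2 inside U as well. *)
Lemma parallel_member_adjacent : adjacent_meet_affinely Hinf k parallel_member.
Proof.
move=> W1 W2 rk1 rk2 sW1H sW2H rk12.
have [A1L rkA1 sWA1 nA1H] := parallel_memberP rk1 sW1H.
have [A2L rkA2 sWA2 nA2H] := parallel_memberP rk2 sW2H.
set A1 := parallel_member W1 in A1L rkA1 sWA1 nA1H *.
set A2 := parallel_member W2 in A2L rkA2 sWA2 nA2H *.
pose U := (A1 + W2)%MS.
have sW1U : (W1 <= U)%MS by exact: submx_trans sWA1 (addsmxSl _ _).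
have sW2U : (W2 <= U)%MS by exact: addsmxSr.
have /card_gt0P[K] : (0 < #|[set K | affine_between k W2 U K && (K \in L)]|)%N.
  have /eqP : (#|[set K | affine_between k W1 U K && (K \in L)]|%:R : R) =
      #|[set K | affine_between k W2 U K && (K \in L)]|%:R by rewrite !card_L_between.
  rewrite eqr_nat => /eqP <-; apply/card_gt0P; exists (rowset A1).
  by rewrite inE A1L andbT /affine_between affine_space_rowset // !rowset_sub sWA1 addsmxSl.
rewrite inE => /andP[/and3P[_ sW2K sKU] KL].
rewrite (parallel_member_unique rk2 sW2H KL sW2K) rowset_sub in sKU.
apply: (cap_notin_hyperplane (T1 := W1) (T2 := W2) rkA1 rkA2).
- have : (\rank (A1 + A2)%MS <= \rank U)%N by rewrite mxrankS // addsmx_sub addsmxSl sKU.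
  have := mxrank_sum_cap A1 W2; have := mxrankS (capmxS sWA1 (submx_refl W2)).
  rewrite /U rkA1 rk2 rk12; clear -k_gt0; lia.
- by apply: (capmx_hyperplane_sub (mxrank_Hinf F n)); rewrite ?rkA1 ?rk1.
- by apply: (capmx_hyperplane_sub (mxrank_Hinf F n)); rewrite ?rkA2 ?rk2.
- by rewrite rk12 prednK // ltnSn.
Qed.

Lemma L_affine_star : exists2 p : V, ~~ (p <= Hinf)%MS & L = affine_star k (rowset p).
Proof.
have [p npH pA] := common_affine_point (mxrank_Hinf F n) k_gt0 le_k2n
  parallel_member_extends parallel_member_adjacent.
exists p => //; apply/setP => K; rewrite inE.
case: (boolP (affine_space k K)) => [|naK]; last first.
  by apply/negbTE; apply: contra naK; exact: L_affine.
case/affine_spaceP => B [rkB nBH] ->; rewrite rowset_sub /=.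
set W := (B :&: Hinf)%MS; have rkW : \rank W = k by apply: mxrank_cap_Hinf.
have sWH : (W <= Hinf)%MS by exact: capmxSr.
have [AL rkA sWA _] := parallel_memberP rkW sWH.
apply/idP/idP => [BL | pB].
  have sWB : rowset W \subset rowset B by rewrite rowset_sub capmxSl.
  have /eqP := parallel_member_unique rkW sWH BL sWB.
  by rewrite eqEsubset !rowset_sub => /andP[_ /(submx_trans (pA _ rkW sWH))].
have npW : ~~ (p <= W)%MS by apply: contra npH => /submx_trans; apply.
have rkWp : \rank (W + p)%MS = k.+1 by rewrite mxrank_adds_row (negbTE npW) rkW.
have sWpA : (W + p <= parallel_member W)%MS by rewrite addsmx_sub sWA pA.
have sWpB : (W + p <= B)%MS by rewrite addsmx_sub capmxSl pB.
by rewrite (rowset_eq (submx_trans (submx_by_rank sWpB _) sWpA)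
  (submx_trans (submx_by_rank sWpA _) sWpB)) ?rkB ?rkA ?rkWp.
Qed.

End ParameterOne.
End CameronLiebler.

Theorem theorem6p5 (R : realType) (F : finFieldType) (n k : nat)
  (hk : (1 <= k)%N) (hn : (2 * k + 1 <= n)%N)
  (L : {set {set 'rV[F]_(n.+1)}}) :
  cameron_liebler R k L ->
  cl_parameter R n k L = 1 ->
  exists P : {set 'rV[F]_(n.+1)}, affine_point P /\
    L = [set K : {set 'rV[F]_(n.+1)} | affine_space k K && (P \subset K)].
Proof.
move=> [L_affine [y L_weights]] param1.
have le_k2n : (k.+2 <= n)%N by clear -hk hn; lia.
have sum1 := sum_weights_eq1 L_affine L_weights (leq_trans (leqnSn k) (ltnW le_k2n)) param1.
have [p npH ->] := L_affine_star L_affine L_weights hk le_k2n sum1.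
by exists (rowset p); split; first exact: affine_point_rowset.
Qed.
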